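(* Dynamic A* (with \texttt{reeval} either true or false) using a dyn-admissible dynamic heuristic returns optimal solutions: whenever it returns a path, that path is a solution of $\mathcal T$ of cost $h^*(s_I)$ (i.e., of minimal cost among all solutions).
   Context: A transition system is $\mathcal T=\langle S,L,c,T,s_I,S_G\rangle$ with finite states $S$, finite labels $L$, cost function $c:L\to\mathbb R_{\ge0}$, transitions $T\subseteq S\times L\times S$, initial state $s_I$, goal states $S_G\subseteq S$. Paths, costs, solutions (paths from $s_I$ to a goal state) are as usual; $h^*(s)$ is the minimal cost of a path from $s$ to a goal ($\infty$ if none). An information source $\sigma$ consists of a set $\mathcal I_\sigma$, $\iota_0^\sigma\in\mathcal I_\sigma$, $\mathrm{update}_\sigma:\mathcal I_\sigma\times T\to\mathcal I_\sigma$, $\mathrm{refine}_\sigma:\mathcal I_\sigma\times S\to\mathcal I_\sigma$. Reachable information: $\iota_n$ is reachable if obtained from $\iota_0^\sigma$ by a sequence of refine steps on states and update steps on transitions $e_1,\dots,e_n$, where each refined state and each origin of an updated transition is $s_I$ or the target of an earlier updated transition. A dynamic heuristic over $\sigma$ is $h:S\times\mathcal I_\sigma\to\mathbb R_{\ge0}\cup\{\infty\}$; it is dyn-admissible if $h(s,\iota)\le h^*(s)$ for all $s$ and all reachable $\iota$. Parent source $\sigma_p$: $\mathcal I_{\sigma_p}$ = partial functions $S\rightharpoonup\mathbb R_{\ge0}\times(T\cup\{\bot\})$; $\iota_0=\{s_I\mapsto\langle0,\bot\rangle\}$; refine is the identity; $\mathrm{update}(\iota,\langle s,\ell,s'\rangle)$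 with $\iota(s)=\langle g,\cdot\rangle$ changes only $s'$, setting it to $\langle g+c(\ell),\langle s,\ell,s'\rangle\rangle$ if $\iota(s')$ is undefined or has $g$-component $\ge g+c(\ell)$, otherwise unchanged. Dynamic A* takes $\mathcal T$, sources $\sigma_p,\sigma_h$, a dynamic heuristic $h$ over $\sigma_h$ and a Boolean flag \texttt{reeval}. Notation: at any moment $g(s)$ is the $g$-component of the current $\mathcal I(\sigma_p)(s)$ and $h(s)$ denotes $h(s,\mathcal I(\sigma_h))$ for the current $\mathcal I(\sigma_h)$. Open is a priority queue of entries $\langle s,g,h\rangle$ (duplicates allowed), popped by minimal stored value $g+h$ (ties arbitrary). Algorithm: 1. $\mathcal I(\sigma):=\iota_0^\sigma$ for both sources; $S_{\mathrm{known}}:=\{s_I\}$; Closed $:=\emptyset$; Open empty. If $h(s_I)<\infty$ insert $\langle s_I,g(s_I),h(s_I)\rangle$. 2. While Open is nonempty: pop an entry $\langle s,\hat g,\hat h\rangle$ of minimal $\hat g+\hat h$. If $s\in$ Closed, continue with the next iteration. Otherwise set $\mathcal I(\sigma):=\mathrm{refine}_\sigma(\mathcal I(\sigma),s)$ for both sources. If \texttt{reeval} is true and $\hat h<h(s)$: if $h(s)<\infty$ insert $\langle s,g(s),h(s)\rangle$; continue with the next iteration (this is a re-evaluation). Otherwise add $s$ to Closed ($s$ is expanded). If $s\in S_G$, return the path obtained by following the parent pointers of $\mathcal I(\sigma_p)$ from $s$ back to $s_I$. Otherwise, for each $t=\langle s,\ell,s'\rangle\in T$ in some order: let $old:=g(s')$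 if $s'\in S_{\mathrm{known}}$ and undefined otherwise; set $\mathcal I(\sigma):=\mathrm{update}_\sigma(\mathcal I(\sigma),t)$ for both sources; add $s'$ to $S_{\mathrm{known}}$; if $h(s')=\infty$ skip $s'$; else if $old$ is undefined insert $\langle s',g(s'),h(s')\rangle$; else if $old>g(s')$, remove $s'$ from Closed if it is there (reopening) and insert $\langle s',g(s'),h(s')\rangle$. 3. Return ''unsolvable''. *)

From HB Require Import structures.
From mathcomp Require Import all_boot all_order all_algebra.
From mathcomp Require Import all_classical all_reals ereal.
Set Implicit Arguments. Unset Strict Implicit. Unset Printing Implicit Defensive.
Import Order.TTheory GRing.Theory Num.Theory.
Local Open Scope ring_scope.

(* A transition <s, l, s'> is a triple ((s, l), s') : S * L * S;           *)
(* source t = t.1.1, label t = t.1.2, target t = t.2.                      *)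

Section TS.
Variables (R : realType) (S L : finType) (c : L -> R) (T : {set S * L * S}).

Fixpoint chain (s : S) (pi : seq (S * L * S)) (s' : S) : Prop :=
  match pi with
  | [::] => s = s'
  | t :: pi' => t.1.1 = s /\ chain t.2 pi' s'
  end.

Definition is_path (s : S) (pi : seq (S * L * S)) (s' : S) : Prop :=
  chain s pi s' /\ (forall t, t \in pi -> t \in T).

Definition cost (pi : seq (S * L * S)) : R := \sum_(t <- pi) c t.1.2.

Definition goal_path (SG : {set S}) (s : S) (pi : seq (S * L * S)) : Prop :=
  exists s', s' \in SG /\ is_path s pi s'.

Definition is_solution (sI : S) (SG : {set S}) (pi : seq (S * L * S)) : Prop :=
  goal_path SG sI pi.

(* h^*(s): infimum (= minimum) of the costs of goal paths from s; +oo if none *)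
Definition hstar (SG : {set S}) (s : S) : \bar R :=
  ereal_inf [set (cost pi)%:E | pi in [set pi | goal_path SG s pi]].
End TS.

Record source (S L : Type) := Source {
  info : Type;
  iota0 : info;
  update : info -> S * L * S -> info;
  refine : info -> S -> info }.

Section Reach.
Variables (S L : finType) (T : {set S * L * S}) (sI : S) (sg : source S L).

(* reach_info iota K : iota is obtained from iota0 by refine/update steps;
   K lists s_I and the targets of the updated transitions so far.          *)
Inductive reach_info : info sg -> seq S -> Prop :=
| reach0 : reach_info (iota0 sg) [:: sI]
| reach_refine i K s : reach_info i K -> s \in K -> reach_info (refine i s) K
| reach_update i K t : reach_info i K -> t \in T -> t.1.1 \in K ->
    reach_info (update i t) (t.2 :: K).

Definition reachable (i : info sg) : Prop := exists K, reach_info i K.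
End Reach.

Definition dyn_admissible (R : realType) (S L : finType) (c : L -> R)
  (T : {set S * L * S}) (sI : S) (SG : {set S}) (sg : source S L)
  (h : S -> info sg -> \bar R) : Prop :=
  forall s i, reachable T sI i -> (h s i <= hstar c T SG s)%E.

(* partial functions S -> R>=0 * (T u {bot}); None = undefined,            *)
(* inner None = bot.                                                       *)
Section Parent.
Variables (R : realType) (S L : finType) (c : L -> R) (sI : S).

Definition pinfo := S -> option (R * option (S * L * S)).

Definition pinfo0 : pinfo :=
  fun s => if s == sI then Some (0, None) else None.

(* update(iota, <s,l,s'>): only defined (i.e. non-identity) when iota(s) is
   defined; then it changes only s'. *)
Definition pupdate (i : pinfo) (t : S * L * S) : pinfo :=
  match i t.1.1 with
  | None => i
  | Some (g, _) =>
      let g' := g + c t.1.2 in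
      let set := fun x => if x == t.2 then Some (g', Some t) else i x in
      match i t.2 with
      | None => set
      | Some (g0, _) => if g' <= g0 then set else i
      end
  end.

Definition prefine (i : pinfo) (_ : S) : pinfo := i.

Definition parent_source : source S L := Source pinfo0 pupdate prefine.

(* g-component (only used where defined) *)
Definition gval (i : pinfo) (s : S) : R :=
  if i s is Some (g, _) then g else 0.

(* pi is the path obtained by following the parent pointers of i from s
   back to s_I (stopping at the first occurrence of s_I) *)
Definition parent_chain (i : pinfo) (s : S) (pi : seq (S * L * S)) : Prop :=
  chain sI pi s /\
  (forall t, t \in pi -> exists g, i t.2 = Some (g, Some t)) /\
  (forall t, t \in pi -> t.2 != sI).
End Parent.

Section DynAstar.
Variables (R : realType) (S L : finType) (c : L -> R) (T : {set S * L * S})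
  (sI : S) (SG : {set S}) (sh : source S L) (h : S -> info sh -> \bar R)
  (reeval : bool).

Local Notation sp := (parent_source c sI).

(* Open-list entries <s, g, h> *)
Definition entry := (S * R * \bar R)%type.
Definition key (e : entry) : \bar R := (e.1.2%:E + e.2)%E.

Record cfg := Cfg {
  c_ip : pinfo R S L;
  c_ih : info sh;
  c_known : {set S};
  c_closed : {set S};
  c_open : seq entry }.

Definition init_cfg : cfg :=
  let hI := h sI (iota0 sh) in
  Cfg (iota0 sp) (iota0 sh) [set sI] (finset.set0 : {set S})
      (if (hI < +oo)%E then [:: (sI, gval (iota0 sp) sI, hI)] else [::]).

Definition process (st : cfg) (t : S * L * S) : cfg :=
  let s' := t.2 in
  let old := if s' \in c_known st then Some (gval (c_ip st) s') else None in
  let ip' := @update S L sp (c_ip st) t in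
  let ih' := update (c_ih st) t in
  let known' := s' |: c_known st in
  let g' := gval ip' s' in
  let hv := h s' ih' in
  if hv == +oo%E then Cfg ip' ih' known' (c_closed st) (c_open st)
  else match old with
       | None => Cfg ip' ih' known' (c_closed st) ((s', g', hv) :: c_open st)
       | Some o =>
           if g' < o
           then Cfg ip' ih' known' (c_closed st :\ s') ((s', g', hv) :: c_open st)
           else Cfg ip' ih' known' (c_closed st) (c_open st)
       end.

Definition succ_transitions (s : S) : seq (S * L * S) :=
  enum [pred t : S * L * S | (t \in T) && (t.1.1 == s)].

Inductive outcome :=
| Cont of cfg
| Ret of seq (S * L * S)
| Unsolvable.

(* one iteration of the while loop (or the final "unsolvable"); the choice
   of the popped minimal entry and of the order of successors is
   nondeterministic *)
Inductive step : cfg -> outcome -> Prop :=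
| step_empty st : c_open st = [::] -> step st Unsolvable
| step_closed st e :
    e \in c_open st -> (forall e', e' \in c_open st -> (key e <= key e')%E) ->
    e.1.1 \in c_closed st ->
    step st (Cont (Cfg (c_ip st) (c_ih st) (c_known st) (c_closed st)
                       (rem e (c_open st))))
| step_reeval st e :
    e \in c_open st -> (forall e', e' \in c_open st -> (key e <= key e')%E) ->
    e.1.1 \notin c_closed st ->
    let s := e.1.1 in
    let ip' := @refine S L sp (c_ip st) s in
    let ih' := refine (c_ih st) s in
    reeval -> (e.2 < h s ih')%E ->
    step st (Cont (Cfg ip' ih' (c_known st) (c_closed st)
                  (if (h s ih' < +oo)%E
                   then (s, gval ip' s, h s ih') :: rem e (c_open st)
                   else rem e (c_open st))))
| step_return st e pi :
    e \in c_open st -> (forall e', e' \in c_open st -> (key e <= key e')%E) ->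
    e.1.1 \notin c_closed st ->
    let s := e.1.1 in
    let ip' := @refine S L sp (c_ip st) s in
    let ih' := refine (c_ih st) s in
    ~~ (reeval && (e.2 < h s ih')%E) ->
    s \in SG -> parent_chain sI ip' s pi ->
    step st (Ret pi)
| step_expand st e ts :
    e \in c_open st -> (forall e', e' \in c_open st -> (key e <= key e')%E) ->
    e.1.1 \notin c_closed st ->
    let s := e.1.1 in
    let ip' := @refine S L sp (c_ip st) s in
    let ih' := refine (c_ih st) s in
    ~~ (reeval && (e.2 < h s ih')%E) ->
    s \notin SG -> perm_eq ts (succ_transitions s) ->
    step st (Cont (foldl process
                    (Cfg ip' ih' (c_known st) (s |: c_closed st)
                         (rem e (c_open st))) ts)).

Inductive returns : cfg -> seq (S * L * S) -> Prop :=
| returns_now st pi : step st (Ret pi) -> returns st pi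
| returns_later st st' pi : step st (Cont st') -> returns st' pi -> returns st pi.

Definition dynAstar_returns (pi : seq (S * L * S)) : Prop :=
  returns init_cfg pi.
End DynAstar.

From HB Require Import structures.
From mathcomp Require Import all_boot all_order all_algebra.
From mathcomp Require Import all_classical all_reals ereal.
Import Order.TTheory GRing.Theory Num.Theory.
Local Open Scope ring_scope.
Set Implicit Arguments. Unset Strict Implicit. Unset Printing Implicit Defensive.

(* The classical A* argument, carried along a run of the nondeterministic
   algorithm.  Parent pointers only ever point to a predecessor whose g-value
   plus the transition cost is at most the g-value of the child, so the path
   returned for a goal s costs at most g(s), which is at most the key of the
   popped entry since h >= 0.  Conversely, on every solution there is a known,
   non-closed node x whose g-value is at most the cost of the prefix up to x:
   successors of a closed node reached at prefix cost have been relaxed, and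
   goals are never closed.  Such an x always has an open entry with key at
   most g(x) + h*(x) <= cost of the solution, because stored h-values are
   admissible: every information the heuristic is evaluated on is reachable.
   The popped entry has minimal key, so the returned path costs at most h*(s_I).
   Reevaluation only replaces an entry by one with a larger, still admissible
   h-value. *)

Section PathCost.
Variables (R : realType) (S L : finType) (c : L -> R) (T : {set S * L * S})
  (SG : {set S}).
Implicit Types (p q : seq (S * L * S)) (t : S * L * S).

Lemma cost_cons t p : cost c (t :: p) = c t.1.2 + cost c p.
Proof. by rewrite /cost big_cons. Qed.

Lemma cost_cat p q : cost c (p ++ q) = cost c p + cost c q.
Proof. by rewrite /cost big_cat. Qed.

Lemma cost_rcons p t : cost c (rcons p t) = cost c p + c t.1.2.
Proof. by rewrite -cats1 cost_cat cost_cons /cost big_nil addr0. Qed.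

Lemma hstar_le_cost s p : goal_path T SG s p -> (hstar c T SG s <= (cost c p)%:E)%E.
Proof. by move=> gp; apply: ereal_inf_lbound; exists p. Qed.

Lemma le_hstar s (x : \bar R) :
  (forall p, goal_path T SG s p -> (x <= (cost c p)%:E)%E) -> (x <= hstar c T SG s)%E.
Proof. by move=> le_x; apply: le_ereal_inf_tmp => _ [p gp <-]; exact: le_x. Qed.

Lemma hstar_lt_pinfty s p : goal_path T SG s p -> (hstar c T SG s < +oo)%E.
Proof. by move/hstar_le_cost/le_lt_trans; apply; rewrite ltry. Qed.

Lemma goal_path_cons s t p :
  goal_path T SG s (t :: p) -> [/\ t.1.1 = s, t \in T & goal_path T SG t.2 p].
Proof.
move=> [s' [s'G [[<- ch] inT]]]; split => //; first by apply: inT; rewrite mem_head.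
by exists s'; split => //; split => // t' t'p; apply: inT; rewrite in_cons t'p orbT.
Qed.

Lemma goal_path_catr s p q : goal_path T SG s (p ++ q) -> exists m, goal_path T SG m q.
Proof.
elim: p s => [|t p IHp] s; first by exists s.
by move=> /goal_path_cons [_ _ /IHp].
Qed.

End PathCost.

Section ParentSource.
Variables (R : realType) (S L : finType) (c : L -> R).
Implicit Types (i : pinfo R S L) (t : S * L * S).

Lemma gval_Some i x g p : i x = Some (g, p) -> gval i x = g.
Proof. by rewrite /gval => ->. Qed.

Lemma pinfo_defined i x : i x != None -> exists g p, i x = Some (g, p).
Proof. by case: (i x) => [[g p]|] // _; exists g, p. Qed.

Lemma pupdate_neq i t x : x != t.2 -> pupdate c i t x = i x.
Proof.
move=> /negbTE xNt; rewrite /pupdate; case: (i t.1.1) => [[g _]|] //.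
by case: (i t.2) => [[g0 _]|]; rewrite ?xNt //; case: ifP; rewrite ?xNt.
Qed.

Lemma pupdate_Some_le i t x g p : i x = Some (g, p) ->
  exists g' p', pupdate c i t x = Some (g', p') /\ g' <= g.
Proof.
have [->|xNt] := eqVneq x t.2; last by exists g, p; rewrite pupdate_neq.
move=> it2; rewrite /pupdate; case: (i t.1.1) => [[g1 _]|]; last by exists g, p.
rewrite it2; case: ifP => le_g; last by exists g, p.
by exists (g1 + c t.1.2), (Some t); rewrite /= eqxx.
Qed.

Lemma pupdate_relax i t g p : i t.1.1 = Some (g, p) ->
  exists g' p', pupdate c i t t.2 = Some (g', p') /\ g' <= g + c t.1.2.
Proof.
rewrite /pupdate => ->; case it2: (i t.2) => [[g0 p0]|]; last first.
  by exists (g + c t.1.2), (Some t); rewrite /= eqxx.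
case: ifP => [_|/negbT]; first by exists (g + c t.1.2), (Some t); rewrite /= eqxx.
by rewrite -ltNge => /ltW le_g; exists g0, p0.
Qed.

Lemma pupdate_SomeP i t x g p : pupdate c i t x = Some (g, p) ->
  i x = Some (g, p) \/
  [/\ x = t.2, p = Some t & exists g1 p1, i t.1.1 = Some (g1, p1) /\ g = g1 + c t.1.2].
Proof.
have [->|xNt] := eqVneq x t.2; last by rewrite pupdate_neq //; left.
rewrite /pupdate; case it1: (i t.1.1) => [[g1 p1]|]; last by left.
case it2: (i t.2) => [[g0 p0]|] /=; last first.
  by rewrite eqxx => -[<- <-]; right; split => //; exists g1, p1.
have [le_g|_] /= := leP (g1 + c t.1.2) g0; last by rewrite it2; left.
by rewrite eqxx => -[<- <-]; right; split => //; exists g1, p1.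
Qed.

Lemma gval_pupdate_le i t x : i x != None ->
  pupdate c i t x != None /\ gval (pupdate c i t) x <= gval i x.
Proof.
move=> /pinfo_defined [g [p ix]]; have [g' [p' [upd le_g]]] := pupdate_Some_le t ix.
by rewrite /gval ix upd.
Qed.

Lemma gval_pupdate_nlt i t x : i x != None ->
  ~~ (gval (pupdate c i t) x < gval i x) -> gval (pupdate c i t) x = gval i x.
Proof.
move=> /(gval_pupdate_le t) [_ le_g]; rewrite -leNgt => ge_g.
by apply/eqP; rewrite eq_le le_g ge_g.
Qed.

End ParentSource.

Section DynamicAstar.
Variables (R : realType) (S L : finType) (c : L -> R) (T : {set S * L * S})
  (sI : S) (SG : {set S}) (sh : source S L) (h : S -> info sh -> \bar R)
  (reeval : bool).
Hypothesis c_ge0 : forall l, 0 <= c l.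
Hypothesis h_ge0 : forall s i, (0 <= h s i)%E.
Hypothesis h_adm : dyn_admissible c T sI SG h.

Local Notation hs := (hstar c T SG).
Local Notation pinf := (pinfo R S L).
Local Notation cfgT := (cfg R sh).

Record info_inv (ip : pinf) (ih : info sh) (known : {set S}) : Prop := InfoInv {
  known_dom : forall x, (x \in known) = (ip x != None);
  g_ge0 : forall x g p, ip x = Some (g, p) -> 0 <= g;
  parent_ok : forall x g t, ip x = Some (g, Some t) ->
    [/\ t \in T, t.2 = x & exists g' p', ip t.1.1 = Some (g', p') /\ g' + c t.1.2 <= g];
  reach_known : exists K, reach_info T sI ih K /\ known =i K;
  sI_defined : ip sI != None;
  gval_sI_le0 : gval ip sI <= 0 }.

Lemma info_inv0 : info_inv (@pinfo0 R S L sI) (iota0 sh) [set sI].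
Proof.
have p0E x : @pinfo0 R S L sI x = if x == sI then Some (0 : R, None) else None by [].
split.
- by move=> x; rewrite finset.in_set1 p0E; case: eqP.
- by move=> x g p; rewrite p0E; case: eqP => // _ [<-].
- by move=> x g t; rewrite p0E; case: eqP.
- by exists [:: sI]; split => [|x]; [exact: reach0 | rewrite finset.in_set1 mem_seq1].
- by rewrite p0E eqxx.
- by rewrite /gval p0E eqxx.
Qed.

Lemma info_inv_refine ip ih known s : info_inv ip ih known -> s \in known ->
  info_inv ip (refine ih s) known.
Proof.
case=> dom g0 par [K [rK kK]] sId sI0 sk; split => //.
by exists K; split => //; apply: reach_refine; rewrite -?kK.
Qed.

Lemma info_inv_update ip ih known t : info_inv ip ih known -> t \in T -> t.1.1 \in known ->
  info_inv (pupdate c ip t) (update ih t) (t.2 |: known).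
Proof.
case=> dom g0 par [K [rK kK]] sId sI0 tT tk.
have [g1 [p1 ip_t1]] : exists g p, ip t.1.1 = Some (g, p) by apply: pinfo_defined; rewrite -dom.
have [gt [pt [ip'_t2 _]]] := pupdate_relax c ip_t1.
split.
- move=> x; have [->|xNt] := eqVneq x t.2; first by rewrite setU11 ip'_t2.
  by rewrite in_setU1 (negbTE xNt) pupdate_neq // dom.
- move=> x g p /pupdate_SomeP [/g0 //|[_ _ [g2 [p2 [ip_t2 ->]]]]].
  by rewrite addr_ge0 // (g0 _ _ _ ip_t2).
- move=> x g t' /pupdate_SomeP [ip_x|[-> [->] [g2 [p2 [ip2 ->]]]]].
    have [t'T <- [g3 [p3 [ip3 le3]]]] := par _ _ _ ip_x.
    have [g4 [p4 [-> le4]]] := pupdate_Some_le c t ip3.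
    by split => //; exists g4, p4; split => //; apply: le_trans le3; rewrite lerD2r.
  have [g4 [p4 [-> le4]]] := pupdate_Some_le c t ip2.
  by split => //; exists g4, p4; split => //; rewrite lerD2r.
- exists (t.2 :: K); split; first by apply: reach_update; rewrite -?kK.
  by move=> x; rewrite in_setU1 in_cons kK.
- by have [] := gval_pupdate_le c t sId.
- by have [_ le] := gval_pupdate_le c t sId; apply: le_trans le sI0.
Qed.

Lemma h_le_hstar ip ih known s : info_inv ip ih known -> (h s ih <= hs s)%E.
Proof. by case=> _ _ _ [K [rK _]] _ _; apply: h_adm; exists K. Qed.

Record astar_inv (st : cfgT) : Prop := AstarInv {
  info_ok : info_inv (c_ip st) (c_ih st) (c_known st);
  open_ok : forall e, e \in c_open st ->
    [/\ e.1.1 \in c_known st, gval (c_ip st) e.1.1 <= e.1.2,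
        (0 <= e.2)%E & (e.2 <= hs e.1.1)%E];
  goal_notin_closed : forall x, x \in SG -> x \notin c_closed st;
  closed_known : {subset c_closed st <= c_known st};
  open_cover : forall x, x \in c_known st -> x \notin c_closed st -> (hs x < +oo)%E ->
    exists2 e, e \in c_open st & e.1 = (x, gval (c_ip st) x) }.

Lemma astar_inv_relax st t (cl : {set S}) (op : seq (entry R S)) :
  astar_inv st -> t \in T -> t.1.1 \in c_known st ->
  let ip' := pupdate c (c_ip st) t in
  let ih' := update (c_ih st) t in
  let e' := (t.2, gval ip' t.2, h t.2 ih') in
  {subset cl <= c_closed st} ->
  (forall x, x != t.2 -> x \in c_closed st -> x \in cl) ->
  {subset op <= e' :: c_open st} -> {subset c_open st <= op} ->
  (h t.2 ih' != +oo%E -> t.2 \notin cl -> e' \in op \/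
     [/\ t.2 \in c_known st, gval ip' t.2 = gval (c_ip st) t.2 & t.2 \notin c_closed st]) ->
  astar_inv (Cfg ip' ih' (t.2 |: c_known st) cl op).
Proof.
move=> I tT tk ip' ih' e' cl_sub cl_sup op_sub op_sup e'_cover.
have info' := info_inv_update (info_ok I) tT tk.
have known_gval x : x \in c_known st -> gval ip' x <= gval (c_ip st) x.
  by rewrite (known_dom (info_ok I)) => /(gval_pupdate_le c t) [].
split => //=.
- move=> e /op_sub; rewrite in_cons => /predU1P [->|eo] /=.
    by split => //; [rewrite setU11 | exact: h_le_hstar info'].
  have [ek le_g h0 h_le] := open_ok I eo; split => //; first by rewrite in_setU1 ek orbT.
  exact: le_trans (known_gval _ ek) le_g.
- by move=> x /(goal_notin_closed I); apply: contra => /cl_sub.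
- by move=> x /cl_sub /(closed_known I) xk; rewrite in_setU1 xk orbT.
- move=> x; have [-> _ t2Ncl fin|xNt] := eqVneq x t.2.
    have hfin : h t.2 ih' != +oo%E by rewrite lt_eqF // (le_lt_trans (h_le_hstar _ info')).
    case: (e'_cover hfin t2Ncl) => [e'o|[t2k -> t2Ncl']]; first by exists e'.
    by have [e eo e1] := open_cover I t2k t2Ncl' fin; exists e => //; apply: op_sup.
  rewrite in_setU1 (negbTE xNt) /= => xk xNcl fin.
  have [|e eo e1] := open_cover I xk _ fin; first by apply: contra xNcl; exact: cl_sup.
  by exists e; [apply: op_sup | rewrite e1 /ip' /gval pupdate_neq].
Qed.

Lemma process_spec (st : cfgT) t :
  let ip' := pupdate c (c_ip st) t in
  let ih' := update (c_ih st) t in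
  let known' := t.2 |: c_known st in
  let e' := (t.2, gval ip' t.2, h t.2 ih') in
  [\/ process c sI h st t = Cfg ip' ih' known' (c_closed st) (c_open st) /\
        (h t.2 ih' = +oo%E \/ t.2 \in c_known st /\ ~~ (gval ip' t.2 < gval (c_ip st) t.2)),
      process c sI h st t = Cfg ip' ih' known' (c_closed st) (e' :: c_open st) /\
        (h t.2 ih' != +oo%E /\ t.2 \notin c_known st) |
      process c sI h st t = Cfg ip' ih' known' (c_closed st :\ t.2) (e' :: c_open st) /\
        [/\ h t.2 ih' != +oo%E, t.2 \in c_known st & gval ip' t.2 < gval (c_ip st) t.2]].
Proof.
rewrite /process /=; case: eqP => [|/eqP hfin]; first by constructor 1; split => //; left.
case: ifP => t2k; last by constructor 2; split => //; rewrite t2k.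
case: ifP => lt_g; first by constructor 3.
by constructor 1; split => //; right; split => //; rewrite lt_g.
Qed.

Lemma astar_inv_process st t : astar_inv st -> t \in T -> t.1.1 \in c_known st ->
  astar_inv (process c sI h st t).
Proof.
move=> I tT tk.
have open_cons e' : {subset c_open st <= e' :: c_open st} by move=> e eo; rewrite in_cons eo orbT.
case: (process_spec st t) => [[-> stay]|[-> _]|[-> _]].
- apply: astar_inv_relax => //.
  move=> hfin t2Ncl; case: stay => [/eqP|[t2k not_lt]]; first by rewrite (negbTE hfin).
  by right; split => //; apply: gval_pupdate_nlt; rewrite -?(known_dom (info_ok I)).
- by apply: astar_inv_relax => // _ _; left; rewrite mem_head.
- apply: astar_inv_relax => //; first by move=> x /setD1P [].
  + by move=> x xNt xcl; apply/setD1P.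
  + by move=> _ _; left; rewrite mem_head.
Qed.

Lemma process_fields st t :
  [/\ c_ip (process c sI h st t) = pupdate c (c_ip st) t,
      c_known (process c sI h st t) = t.2 |: c_known st &
      {subset c_closed (process c sI h st t) <= c_closed st}].
Proof.
by case: (process_spec st t) => [[-> _]|[-> _]|[-> _]]; split => // x /setD1P [].
Qed.

(* A closed node whose g-value improves stays closed when its heuristic value
   is +oo; admissibility rules this out when [hs x] is finite. *)
Lemma process_closed_gval st t x : astar_inv st -> t \in T -> t.1.1 \in c_known st ->
  x \in c_closed (process c sI h st t) -> (hs x < +oo)%E ->
  x \in c_closed st /\ gval (c_ip (process c sI h st t)) x = gval (c_ip st) x.
Proof.
move=> I tT tk; have [-> _ cl_sub] := process_fields st t.
have [->|xNt] := eqVneq x t.2; last by move=> /cl_sub xcl _; rewrite /gval pupdate_neq.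
have hle := h_le_hstar t.2 (info_inv_update (info_ok I) tT tk).
case: (process_spec st t) => [[-> stay]|[-> [_ t2Nk]]|[-> _]] /= t2cl fin.
- split => //; case: stay => [hoo|[t2k not_lt]].
    by move: (le_lt_trans hle fin); rewrite hoo ltxx.
  by apply: gval_pupdate_nlt; rewrite -?(known_dom (info_ok I)).
- by move: t2Nk; rewrite (closed_known I t2cl).
- by move: t2cl; rewrite setD11.
Qed.

Definition pending_ok (ts : seq (S * L * S)) (st : cfgT) :=
  forall t, t \in ts -> t \in T /\ t.1.1 \in c_known st.

Lemma pending_ok_process t ts st : pending_ok (t :: ts) st ->
  pending_ok ts (process c sI h st t).
Proof.
move=> ts_ok t' t'ts; have [t'T t'k] : t' \in T /\ t'.1.1 \in c_known st.
  by apply: ts_ok; rewrite in_cons t'ts orbT.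
have [_ -> _] := process_fields st t.
by split => //; rewrite in_setU1 t'k orbT.
Qed.

Lemma astar_inv_expand ts st : astar_inv st -> pending_ok ts st ->
  astar_inv (foldl (process c sI h) st ts).
Proof.
elim: ts st => [|t ts IHts] st I ts_ok //=.
have [tT tk] := ts_ok t (mem_head _ _).
by apply: IHts; [exact: astar_inv_process | exact: pending_ok_process].
Qed.

Definition relaxed (st : cfgT) (g : R) (t : S * L * S) :=
  t.2 \in c_known st /\ gval (c_ip st) t.2 <= g + c t.1.2.

(* The A* invariant along a path p: a transition of p whose source is closed
   with g-value at most the cost of the preceding prefix has been relaxed,
   unless it is still [pending] in the expansion under way. *)
Definition relaxed_along (pending p : seq (S * L * S)) (st : cfgT) :=
  forall p1 t p2, p = p1 ++ t :: p2 -> t.1.1 \in c_closed st ->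
    gval (c_ip st) t.1.1 <= cost c p1 -> t \in pending \/ relaxed st (cost c p1) t.

Lemma relaxed_process st g t t0 : astar_inv st -> relaxed st g t ->
  relaxed (process c sI h st t0) g t.
Proof.
move=> I [t2k le_g]; rewrite /relaxed; have [-> -> _] := process_fields st t0.
split; first by rewrite in_setU1 t2k orbT.
have t2d : c_ip st t.2 != None by rewrite -(known_dom (info_ok I)).
by have [_ le_g'] := gval_pupdate_le c t0 t2d; apply: le_trans le_g.
Qed.

Lemma process_relaxed st t : astar_inv st -> t.1.1 \in c_known st ->
  relaxed (process c sI h st t) (gval (c_ip st) t.1.1) t.
Proof.
move=> I tk; rewrite /relaxed; have [-> -> _] := process_fields st t.
split; first by rewrite setU11.
have t1d : c_ip st t.1.1 != None by rewrite -(known_dom (info_ok I)).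
have [g [q ip_t1]] := pinfo_defined t1d.
have [g' [q' [upd le_g]]] := pupdate_relax c ip_t1.
by rewrite (gval_Some upd) (gval_Some ip_t1).
Qed.

Lemma relaxed_along_process p t0 ts st : goal_path T SG sI p -> astar_inv st ->
  t0 \in T -> t0.1.1 \in c_known st ->
  relaxed_along (t0 :: ts) p st -> relaxed_along ts p (process c sI h st t0).
Proof.
move=> gp I t0T t0k rel p1 t p2 p_eq tcl le_g.
move: gp; rewrite p_eq => /goal_path_catr [m gp_t].
have fin : (hs t.1.1 < +oo)%E.
  by have [-> _ _] := goal_path_cons gp_t; exact: hstar_lt_pinfty gp_t.
have [tcl0 g_eq] := process_closed_gval I t0T t0k tcl fin.
rewrite g_eq in le_g; case: (rel p1 t p2 p_eq tcl0 le_g) => [|rel_t]; last first.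
  by right; apply: relaxed_process.
rewrite in_cons => /predU1P [t_eq|]; last by left.
subst t; have [t2k le_g'] := process_relaxed I t0k.
by right; split => //; apply: le_trans le_g' _; rewrite lerD2r.
Qed.

Lemma relaxed_along_expand p ts st : goal_path T SG sI p -> astar_inv st ->
  pending_ok ts st -> relaxed_along ts p st ->
  relaxed_along [::] p (foldl (process c sI h) st ts).
Proof.
move=> gp; elim: ts st => [|t ts IHts] st I ts_ok rel //=.
have [tT tk] := ts_ok t (mem_head _ _).
apply: IHts; [exact: astar_inv_process | exact: pending_ok_process |].
exact: relaxed_along_process.
Qed.

Lemma open_cover_rem st e x : astar_inv st -> x \in c_known st -> x \notin c_closed st ->
  (hs x < +oo)%E -> x != e.1.1 ->
  exists2 e', e' \in rem e (c_open st) & e'.1 = (x, gval (c_ip st) x).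
Proof.
move=> I xk xNcl fin xNe; have [e' e'o e'1] := open_cover I xk xNcl fin.
exists e' => //; apply: rem_mem e'o; apply: contraNneq xNe => e'e.
by rewrite -e'e e'1.
Qed.

Lemma astar_inv_skip st e : astar_inv st -> e \in c_open st -> e.1.1 \in c_closed st ->
  astar_inv (Cfg (c_ip st) (c_ih st) (c_known st) (c_closed st) (rem e (c_open st))).
Proof.
move=> I eo ecl; split=> /=; try exact: (info_ok I); try exact: (goal_notin_closed I);
  try exact: (closed_known I).
- by move=> e' /mem_rem; exact: (open_ok I).
- move=> x xk xNcl fin; apply: open_cover_rem => //.
  by apply: contraNneq xNcl => ->.
Qed.

Lemma astar_inv_reeval st e : astar_inv st -> e \in c_open st ->
  let s := e.1.1 in
  let ih' := refine (c_ih st) s in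
  astar_inv (Cfg (c_ip st) ih' (c_known st) (c_closed st)
    (if (h s ih' < +oo)%E then (s, gval (c_ip st) s, h s ih') :: rem e (c_open st)
     else rem e (c_open st))).
Proof.
move=> I eo s ih'; have [sk _ _ _] := open_ok I eo.
have info' := info_inv_refine (info_ok I) sk.
have rem_ok e' : e' \in rem e (c_open st) -> _ := fun e'r => open_ok I (mem_rem e'r).
split=> //=; try exact: (goal_notin_closed I); try exact: (closed_known I).
- move=> e'; case: ifP => _; last exact: rem_ok.
  rewrite in_cons => /predU1P [->|]; last exact: rem_ok.
  by split => //; [exact: h_ge0 | exact: h_le_hstar info'].
- move=> x xk xNcl fin; have [xs|xNs] := eqVneq x s.
    rewrite xs in fin *.
    have -> : (h s ih' < +oo)%E by apply: le_lt_trans (h_le_hstar s info') fin.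
    by exists (s, gval (c_ip st) s, h s ih'); rewrite ?mem_head.
  have [e' e'o e'1] := open_cover_rem I xk xNcl fin xNs.
  by exists e' => //; case: ifP => _ //; rewrite in_cons e'o orbT.
Qed.

Lemma astar_inv_close st e : astar_inv st -> e \in c_open st -> e.1.1 \notin SG ->
  astar_inv (Cfg (c_ip st) (refine (c_ih st) e.1.1) (c_known st)
                 (e.1.1 |: c_closed st) (rem e (c_open st))).
Proof.
move=> I eo sNG; have [sk _ _ _] := open_ok I eo.
split=> /=; first exact: info_inv_refine (info_ok I) sk.
- by move=> e' /mem_rem; exact: (open_ok I).
- move=> x xG; rewrite in_setU1 negb_or (goal_notin_closed I xG) andbT.
  by apply: contraNneq sNG => <-.
- by move=> x; rewrite in_setU1 => /predU1P [->|/(closed_known I)].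
- move=> x xk; rewrite in_setU1 negb_or => /andP [xNs xNcl] fin.
  exact: open_cover_rem.
Qed.

Lemma relaxed_along_eq pending p st st' : c_ip st' = c_ip st -> c_known st' = c_known st ->
  c_closed st' = c_closed st -> relaxed_along pending p st -> relaxed_along pending p st'.
Proof. by rewrite /relaxed_along /relaxed => -> -> ->. Qed.

Lemma relaxed_along_close p s ts st st' : goal_path T SG sI p ->
  perm_eq ts (succ_transitions T s) -> c_ip st' = c_ip st -> c_known st' = c_known st ->
  c_closed st' = s |: c_closed st -> relaxed_along [::] p st -> relaxed_along ts p st'.
Proof.
rewrite /relaxed_along /relaxed => gp pts -> -> -> rel p1 t p2 p_eq.
rewrite in_setU1 => /predU1P [t_s|tcl le_g]; last by case: (rel p1 t p2 p_eq tcl le_g) => //; right.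
move: gp; rewrite p_eq => /goal_path_catr [m /goal_path_cons [_ tT _]] _.
by left; rewrite (perm_mem pts) mem_enum inE tT t_s eqxx.
Qed.

Definition optimality_inv (st : cfgT) :=
  astar_inv st /\ forall p, goal_path T SG sI p -> relaxed_along [::] p st.

Lemma optimality_inv_step st st' :
  step c T sI SG h reeval st (Cont st') -> optimality_inv st -> optimality_inv st'.
Proof.
move E: (Cont st') => o stp; case: stp E => // {}st e.
- move=> eo _ ecl [->] [I rel]; split; first exact: astar_inv_skip.
  by move=> p gp; apply: relaxed_along_eq (rel p gp).
- move=> eo _ _ s ip' ih' _ _ [->] [I rel]; split; first exact: astar_inv_reeval.
  by move=> p gp; apply: relaxed_along_eq (rel p gp).
- move=> ts eo _ _ s ip' ih' _ sNG pts [->] [I rel].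
  have [sk _ _ _] := open_ok I eo.
  have I0 := astar_inv_close I eo sNG.
  have ts_ok : pending_ok ts st.
    by move=> t; rewrite (perm_mem pts) mem_enum inE => /andP [tT /eqP ->].
  split; first exact: astar_inv_expand.
  move=> p gp; apply: relaxed_along_expand => //.
  exact: relaxed_along_close gp pts _ _ _ (rel p gp).
Qed.

Lemma optimality_inv_init : optimality_inv (init_cfg c sI h).
Proof.
have info0 := info_inv0.
split; last by move=> p _ p1 t p2 _; rewrite /= finset.in_set0.
split=> //=.
- move=> e; case: ifP => // _; rewrite mem_seq1 => /eqP -> /=.
  by split; rewrite ?set11 ?h_ge0 //; exact: h_le_hstar info0.
- by move=> x _; rewrite finset.in_set0.
- by move=> x; rewrite finset.in_set0.
- move=> x; rewrite finset.in_set1 => /eqP -> _ fin.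
  have -> : (h sI (iota0 sh) < +oo)%E by apply: le_lt_trans (h_le_hstar sI info0) fin.
  by exists (sI, gval (@pinfo0 R S L sI) sI, h sI (iota0 sh)); rewrite ?mem_seq1.
Qed.

Lemma parent_chain_cost_le ip ih known u p s gu pu : info_inv ip ih known ->
  chain u p s -> (forall t, t \in p -> exists g, ip t.2 = Some (g, Some t)) ->
  ip u = Some (gu, pu) -> gu + cost c p <= gval ip s.
Proof.
move=> Iinfo; elim: p u gu pu => [|t p IHp] u gu pu /=.
  by move=> <- _ ip_u; rewrite /cost big_nil addr0 (gval_Some ip_u).
move=> [tu ch] ptrs ip_u; have [g ip_t2] := ptrs t (mem_head _ _).
have [_ _ [g' [p' [ip_t1 le_g]]]] := parent_ok Iinfo ip_t2.
rewrite tu ip_u in ip_t1; case: ip_t1 => g'E _; rewrite -g'E in le_g.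
have ptrs' t' : t' \in p -> exists g, ip t'.2 = Some (g, Some t').
  by move=> t'p; apply: ptrs; rewrite in_cons t'p orbT.
have := IHp _ _ _ ch ptrs' ip_t2.
by rewrite cost_cons addrA; apply: le_trans; rewrite lerD2r.
Qed.

Lemma parent_chain_solution ip ih known s pi : info_inv ip ih known -> s \in SG ->
  parent_chain sI ip s pi -> is_solution T sI SG pi /\ cost c pi <= gval ip s.
Proof.
move=> Iinfo sG [ch [ptrs _]]; split.
  exists s; split => //; split => // t /ptrs [g ip_t2].
  by have [] := parent_ok Iinfo ip_t2.
have [g0 [p0 ip_sI]] := pinfo_defined (sI_defined Iinfo).
apply: le_trans (parent_chain_cost_le Iinfo ch ptrs ip_sI).
by rewrite lerDr (g_ge0 Iinfo ip_sI).
Qed.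

Lemma open_on_goal_path st p q1 q2 u : astar_inv st -> relaxed_along [::] p st ->
  p = q1 ++ q2 -> goal_path T SG u q2 -> u \in c_known st ->
  gval (c_ip st) u <= cost c q1 ->
  exists x q1 q2, [/\ p = q1 ++ q2, goal_path T SG x q2, x \in c_known st,
    x \notin c_closed st & gval (c_ip st) x <= cost c q1].
Proof.
move=> I rel; elim: q2 q1 u => [|t q2 IHq] q1 u p_eq gp_u uk le_g.
  exists u, q1, [::]; split => //; apply: (goal_notin_closed I).
  by case: gp_u => s' [s'G [/= -> _]].
have [ucl|uNcl] := boolP (u \in c_closed st); last by exists u, q1, (t :: q2).
have [tu _ gpt] := goal_path_cons gp_u; rewrite -tu in ucl le_g.
have [//|[t2k le_g']] := rel q1 t q2 p_eq ucl le_g.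
by apply: (IHq (rcons q1 t) t.2) => //; rewrite ?cat_rcons ?cost_rcons.
Qed.

Lemma min_key_le_hstar st (e : entry R S) : optimality_inv st ->
  (forall e', e' \in c_open st -> (key e <= key e')%E) -> (key e <= hs sI)%E.
Proof.
move=> [I rel] e_min; apply: le_hstar => p gp.
have sIk : sI \in c_known st by rewrite (known_dom (info_ok I)) (sI_defined (info_ok I)).
have sI0 : gval (c_ip st) sI <= cost c ([::] : seq (S * L * S)).
  by rewrite /cost big_nil; exact: gval_sI_le0 (info_ok I).
have [x [q1 [q2 [-> gpx xk xNcl le_g]]]] :=
  open_on_goal_path I (rel p gp) (esym (cat0s p)) gp sIk sI0.
have [e' e'o e'1] := open_cover I xk xNcl (hstar_lt_pinfty c gpx).
have [_ _ _ e'h] := open_ok I e'o.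
apply: (le_trans (e_min e' e'o)); rewrite /key cost_cat EFinD.
move: e'1 e'h; case: e' {e'o} => [[y g'] h'] /= [-> ->] e'h.
by apply: leeD; [rewrite lee_fin | exact: le_trans e'h (hstar_le_cost c gpx)].
Qed.

Lemma returned_optimal st (pi : seq (S * L * S)) :
  step c T sI SG h reeval st (@Ret R S L sh pi) -> optimality_inv st ->
  is_solution T sI SG pi /\ (cost c pi)%:E = hs sI.
Proof.
move E: (@Ret R S L sh pi) => o stp; case: stp E => // {}st e pi'.
move=> eo e_min _ s ip' ih' _ sG ch [->] Iopt.
have [sol le_cost] := parent_chain_solution (info_ok Iopt.1) sG ch.
have [_ le_g h0 _] := open_ok Iopt.1 eo.
split => //; apply/eqP; rewrite eq_le hstar_le_cost // andbT.
apply: le_trans (min_key_le_hstar Iopt e_min).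
by rewrite /key -[X in (X <= _)%E]adde0 leeD // lee_fin (le_trans le_cost).
Qed.

Lemma returns_optimal st pi : returns c T sI SG h reeval st pi -> optimality_inv st ->
  is_solution T sI SG pi /\ (cost c pi)%:E = hs sI.
Proof.
elim=> {st pi} [st pi /returned_optimal //|st st' pi stp _ IH Iopt].
exact: IH (optimality_inv_step stp Iopt).
Qed.

End DynamicAstar.

Theorem theorem5 (R : realType) (S L : finType) (c : L -> R)
  (T : {set S * L * S}) (sI : S) (SG : {set S}) (sh : source S L)
  (h : S -> info sh -> \bar R) (reeval : bool) (pi : seq (S * L * S)) :
  (forall l, 0 <= c l) ->
  (forall s i, (0 <= h s i)%E) ->
  dyn_admissible c T sI SG h ->
  dynAstar_returns c T sI SG h reeval pi ->
  is_solution T sI SG pi /\ (cost c pi)%:E = hstar c T SG sI.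
Proof.
move=> c_ge0 h_ge0 h_adm run.
apply: (returns_optimal c_ge0 h_ge0 h_adm run).
exact: optimality_inv_init.
Qed.
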